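(* Let $M$ be an ACI-matrix over a field $\mathbb{F}$ and let $F_1,F_2$ be two overlapping (i.e. $F_1\cap F_2\neq\emptyset$) factor sets (resp. semifactor sets) of $M$. Then $F_1\cap F_2$ and $F_1\cup F_2$ are factor sets (resp. semifactor sets) of $M$.
   Context: Let $\mathbb{F}$ be a field. An ACI-matrix is a matrix with entries in $\mathbb{F}[x_1,\dots,x_k]$ whose entries are polynomials of degree at most one and such that no indeterminate appears in two different columns. A completion is an assignment of values in $\mathbb{F}$ to all indeterminates; $\mathrm{maxRank}(N)$ is the maximum rank of a completion. ACI-matrices (and blocks) of size $0\times q$ ($q>0$, wide degenerate), $p\times 0$ ($p>0$, tall degenerate) and $0\times0$ (void) are allowed. $N$ is FRmR if $\mathrm{maxRank}(N)=\mathrm{rows}(N)$, FCmR if $\mathrm{maxRank}(N)=\mathrm{cols}(N)$; by convention tall degenerate is FRmR, wide degenerate is FCmR, void is both. For an $m\times n$ block matrix $\begin{bmatrix} A & B\\ 0 & C\end{bmatrix}$ with lower-left $r\times s$ zero block, the zero block is Big if $r+s>\max\{m,n\}$, Medium if $r+s=\max\{m,n\}$. For $F=\{f_1<\dots<f_s\}\subseteq\{1,\dots,n\}$ with complement $\{g_1<\dots<g_{n-s}\}$, $Q_F$ is the $n\times n$ permutation matrix such that $MQ_F$ has as columns $f_1,\dots,f_s,g_1,\dots,g_{n-s}$ of $M$ in that order. For an $m\times n$ ACI-matrix $M$, $F$ is a factor set of $M$ if there is a nonsingular constant $m\times m$ matrix $R$ with $RMQ_F=\begin{bmatrix} A & B\\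 0 & C\end{bmatrix}$, where $A$ has $\#F$ columns, the zero block is Big, $A$ is FRmR and $C$ is FCmR; $F$ is a semifactor set if the same holds with the zero block Medium. *)

From mathcomp Require Import all_boot all_order all_algebra.
Set Implicit Arguments. Unset Strict Implicit. Unset Printing Implicit Defensive.
Import GRing.Theory.
Local Open Scope ring_scope.

(* An ACI-matrix of size m x n over F in the indeterminates x_0..x_(k-1):
   entry (i,j) is the affine polynomial
      acst i j + \sum_l (acoef l) i j * x_l
   (exactly the polynomials of degree at most one). *)
Record aciMx (F : fieldType) (k m n : nat) := AciMx {
  acst : 'M[F]_(m, n);
  acoef : 'I_k -> 'M[F]_(m, n) }.

Section ACI.
Variable F : fieldType.
Variable k : nat.

Definition is_aci m n (M : aciMx F k m n) : Prop :=
  forall (l : 'I_k) (i1 i2 : 'I_m) (j1 j2 : 'I_n),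
    acoef M l i1 j1 != 0 -> acoef M l i2 j2 != 0 -> j1 = j2.

Definition completion m n (M : aciMx F k m n) (v : 'I_k -> F) : 'M[F]_(m, n) :=
  acst M + \sum_(l < k) v l *: acoef M l.

Definition is_maxRank m n (M : aciMx F k m n) (r : nat) : Prop :=
  (exists v, \rank (completion M v) = r) /\
  (forall v, (\rank (completion M v) <= r)%N).

Definition FRmR m n (M : aciMx F k m n) : Prop := n = 0%N \/ is_maxRank M m.
Definition FCmR m n (M : aciMx F k m n) : Prop := m = 0%N \/ is_maxRank M n.

Definition aci_lmul m m' n (R : 'M[F]_(m', m)) (M : aciMx F k m n)
  : aciMx F k m' n := AciMx (R *m acst M) (fun l => R *m acoef M l).
Definition aci_rmul m n n' (M : aciMx F k m n) (Q : 'M[F]_(n, n'))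
  : aciMx F k m n' := AciMx (acst M *m Q) (fun l => acoef M l *m Q).
Definition aci_cast m n m' n' (e : (m = m') * (n = n')) (M : aciMx F k m n)
  : aciMx F k m' n' := AciMx (castmx e (acst M)) (fun l => castmx e (acoef M l)).

Definition aci_ul m1 m2 n1 n2 (M : aciMx F k (m1 + m2) (n1 + n2)) :=
  AciMx (ulsubmx (acst M)) (fun l => ulsubmx (acoef M l)).
Definition aci_dl m1 m2 n1 n2 (M : aciMx F k (m1 + m2) (n1 + n2)) :=
  AciMx (dlsubmx (acst M)) (fun l => dlsubmx (acoef M l)).
Definition aci_dr m1 m2 n1 n2 (M : aciMx F k (m1 + m2) (n1 + n2)) :=
  AciMx (drsubmx (acst M)) (fun l => drsubmx (acoef M l)).

Definition aci_zero m n (M : aciMx F k m n) : Prop :=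
  acst M = 0 /\ forall l, acoef M l = 0.

End ACI.

(* Q_S: column j of M Q_S is column (colperm S j) of M, where the columns
   f_1<...<f_s of S come first, followed by the complement g_1<...<g_{n-s}. *)
Definition colperm n (S : {set 'I_n}) (j : 'I_n) : 'I_n :=
  nth j (enum S ++ enum (~: S)) j.

Definition Qmx (F : fieldType) n (S : {set 'I_n}) : 'M[F]_n :=
  \matrix_(i, j) (i == colperm S j)%:R.

Lemma card_split n (S : {set 'I_n}) : n = (#|S| + (n - #|S|))%N.
Proof. by rewrite subnKC //; apply: leq_trans (max_card _) _; rewrite card_ord. Qed.

(* [medium = false]: factor set (Big zero block);
   [medium = true] : semifactor set (Medium zero block).
   R M Q_S = [A B; 0 C] with A of size p x #|S| and zero block of size q x #|S|. *)
Definition factor_like (medium : bool) (F : fieldType) k m n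
    (M : aciMx F k m n) (S : {set 'I_n}) : Prop :=
  exists R : 'M[F]_m, R \in unitmx /\
  exists (p q : nat) (e : (p + q)%N = m),
    let N := aci_cast (esym e, card_split S)
               (aci_rmul (aci_lmul R M) (Qmx F S)) in
    [/\ aci_zero (aci_dl N),
        (if medium then (q + #|S|)%N == maxn m n else (maxn m n < q + #|S|)%N),
        FRmR (aci_ul N) & FCmR (aci_dr N)].

Definition factor_set F k m n (M : aciMx F k m n) S := factor_like false M S.
Definition semifactor_set F k m n (M : aciMx F k m n) S := factor_like true M S.

From mathcomp Require Import all_boot all_order all_algebra zify perm.
Set Implicit Arguments. Unset Strict Implicit. Unset Printing Implicit Defensive.
Import GRing.Theory.
Local Open Scope ring_scope.

(* For a set S of columns let rho(S) (colrank M S) be the dimension of the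
   span of the S-columns of all coefficient matrices of M, constant term
   included.  The S-columns of every completion lie in that span, so every
   completion has rank at most rho(S) + (n - #|S|).  For nonempty S, S is a
   (semi)factor set exactly when some completion attains this bound and the
   zero block, of size (m - rho(S)) + #|S| = m + n - maxRank M, is Big
   (Medium): R can be chosen to clear the rows below rho(S) on the S-columns,
   and the ACI condition lets completions maximizing the ranks of A and C be
   glued into one completion of M.  As rho is submodular, so is
   S |-> rho(S) + n - #|S|, and the sets attaining its minimum maxRank M are
   closed under intersection and union. *)

Section ColumnPermutation.
Variable n : nat.
Implicit Types (S : {set 'I_n}) (j : 'I_n).

Lemma size_colperm_seq S : size (enum S ++ enum (~: S)) = n.
Proof. by rewrite size_cat -!cardE cardsC card_ord. Qed.

Lemma uniq_colperm_seq S : uniq (enum S ++ enum (~: S)).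
Proof.
rewrite cat_uniq !enum_uniq andbT /=; apply/hasPn => x.
by rewrite !mem_enum inE => ->.
Qed.

Lemma colperm_inj S : injective (colperm S).
Proof.
move=> j1 j2; rewrite /colperm (set_nth_default j1 j2) ?size_colperm_seq //.
by move/eqP; rewrite nth_uniq ?size_colperm_seq ?uniq_colperm_seq // => /eqP/val_inj.
Qed.

Definition colperm_perm S : 'S_n := perm (@colperm_inj S).

Lemma colpermKV S c : colperm S ((colperm_perm S)^-1 c)%g = c.
Proof. by have := permKV (colperm_perm S) c; rewrite permE. Qed.

Lemma mem_colperm S j : (colperm S j \in S) = (j < #|S|)%N.
Proof.
rewrite /colperm nth_cat -cardE; case: ltnP => hj.
  by rewrite -mem_enum mem_nth // -cardE.
have : nth j (enum (~: S)) (j - #|S|) \in enum (~: S).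
  by rewrite mem_nth // -cardE -(ltn_add2l #|S|) cardsC card_ord subnKC.
by rewrite mem_enum inE => /negbTE.
Qed.

Lemma Qmx_unit (F : fieldType) S : Qmx F S \in unitmx.
Proof.
have -> : Qmx F S = (perm_mx (colperm_perm S))^T.
  by apply/matrixP => i j; rewrite !mxE permE eq_sym.
by rewrite unitmx_tr unitmx_perm.
Qed.

Lemma mulmx_QmxE (F : fieldType) m S (X : 'M[F]_(m, n)) i j :
  (X *m Qmx F S) i j = X i (colperm S j).
Proof.
rewrite mxE (bigD1 (colperm S j)) //= mxE eqxx mulr1 big1 ?addr0 // => i' hi.
by rewrite mxE (negbTE hi) mulr0.
Qed.

End ColumnPermutation.

Section RankBounds.
Variable F : fieldType.

Lemma mxrank_castmx m1 n1 m2 n2 (e : (m1 = m2) * (n1 = n2)) (A : 'M[F]_(m1, n1)) :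
  \rank (castmx e A) = \rank A.
Proof. by case: e => e1 e2; case: m2 / e1; case: n2 / e2; rewrite castmx_id. Qed.

Lemma mxrank_unitMl m n (R : 'M[F]_m) (X : 'M[F]_(m, n)) :
  R \in unitmx -> \rank (R *m X) = \rank X.
Proof.
move=> Ru; rewrite -mxrank_tr trmx_mul mxrankMfree ?mxrank_tr //.
by rewrite row_free_unit unitmx_tr.
Qed.

Lemma mxrank_col_mx_le m1 m2 n (A : 'M[F]_(m1, n)) (B : 'M[F]_(m2, n)) :
  (\rank (col_mx A B) <= \rank A + \rank B)%N.
Proof. by rewrite -addsmxE; exact: mxrank_adds_leqif. Qed.

Lemma mxrank_row_mx_le m n1 n2 (A : 'M[F]_(m, n1)) (B : 'M[F]_(m, n2)) :
  (\rank (row_mx A B) <= \rank A + \rank B)%N.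
Proof. by rewrite -mxrank_tr tr_row_mx -(mxrank_tr A) -(mxrank_tr B) mxrank_col_mx_le. Qed.

Variables (p1 p2 s t : nat) (A : 'M[F]_(p1, s)) (B : 'M[F]_(p1, t)) (C : 'M[F]_(p2, t)).

Lemma mxrank_block_triangular_ge :
  row_free A -> (p1 + \rank C <= \rank (block_mx A B 0 C))%N.
Proof.
case/row_freeP => X hX.
have := mxrankM_maxl (block_mx A B 0 C) (block_mx X (- (X *m B)) 0 1%:M).
rewrite mulmx_block !mulmx0 !mul0mx !addr0 !add0r mulmx1 hX mulmxN mulmxA hX mul1mx.
by rewrite addNr mulmx1 rank_diag_block_mx mxrank1.
Qed.

Lemma mxrank_block_triangular_leC : (\rank (block_mx A B 0 C) <= p1 + \rank C)%N.
Proof.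
rewrite block_mxEv; apply: leq_trans (mxrank_col_mx_le _ _) _.
by rewrite rank_row_0mx leq_add2r rank_leq_row.
Qed.

Lemma mxrank_block_triangular_leA : (\rank (block_mx A B 0 C) <= \rank A + t)%N.
Proof.
rewrite block_mxEh; apply: leq_trans (mxrank_row_mx_le _ _) _.
by rewrite rank_col_mx0 leq_add2l rank_leq_col.
Qed.

End RankBounds.

Section Completion.
Variables (F : fieldType) (k : nat).

Definition aci_coef m n (N : aciMx F k m n) (l : 'I_k.+1) : 'M[F]_(m, n) :=
  if unlift ord0 l is Some l' then acoef N l' else acst N.

Lemma aci_zeroP m n (N : aciMx F k m n) : aci_zero N <-> forall l, aci_coef N l = 0.
Proof.
split=> [[h0 h] l | h]; first by rewrite /aci_coef; case: unlift.
split=> [|l]; first by have := h ord0; rewrite /aci_coef unlift_none.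
by have := h (lift ord0 l); rewrite /aci_coef liftK.
Qed.

Lemma aci_coef_dl m1 m2 n1 n2 (N : aciMx F k (m1 + m2) (n1 + n2)) l :
  aci_coef (aci_dl N) l = dlsubmx (aci_coef N l).
Proof. by rewrite /aci_coef; case: unlift. Qed.

Lemma completionE m n (N : aciMx F k m n) v i j :
  completion N v i j = acst N i j + \sum_(l < k) v l * acoef N l i j.
Proof.
rewrite /completion !mxE summxE; congr (_ + _).
by apply: eq_bigr => l _; rewrite mxE.
Qed.

Lemma completion_lmul m m' n (R : 'M[F]_(m', m)) (N : aciMx F k m n) v :
  completion (aci_lmul R N) v = R *m completion N v.
Proof.
rewrite /completion /= mulmxDr mulmx_sumr; congr (_ + _).
by apply: eq_bigr => l _; rewrite scalemxAr.
Qed.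

Lemma completion_rmul m n n' (N : aciMx F k m n) (Q : 'M[F]_(n, n')) v :
  completion (aci_rmul N Q) v = completion N v *m Q.
Proof.
rewrite /completion /= mulmxDl mulmx_suml; congr (_ + _).
by apply: eq_bigr => l _; rewrite scalemxAl.
Qed.

Lemma completion_cast m n m' n' (e : (m = m') * (n = n')) (N : aciMx F k m n) v :
  completion (aci_cast e N) v = castmx e (completion N v).
Proof.
case: e => e1 e2; case: m' / e1; case: n' / e2.
by rewrite /completion /= !castmx_id.
Qed.

Section Blocks.
Variables (m1 m2 n1 n2 : nat) (N : aciMx F k (m1 + m2) (n1 + n2)) (v : 'I_k -> F).

Lemma completion_ul : completion (aci_ul N) v = ulsubmx (completion N v).
Proof.
apply/matrixP => i j; rewrite completionE [RHS]mxE [RHS]mxE completionE /= !mxE.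
by congr (_ + _); apply: eq_bigr => l _; rewrite !mxE.
Qed.

Lemma completion_dl : completion (aci_dl N) v = dlsubmx (completion N v).
Proof.
apply/matrixP => i j; rewrite completionE [RHS]mxE [RHS]mxE completionE /= !mxE.
by congr (_ + _); apply: eq_bigr => l _; rewrite !mxE.
Qed.

Lemma completion_dr : completion (aci_dr N) v = drsubmx (completion N v).
Proof.
apply/matrixP => i j; rewrite completionE [RHS]mxE [RHS]mxE completionE /= !mxE.
by congr (_ + _); apply: eq_bigr => l _; rewrite !mxE.
Qed.

Lemma completion_upper_triangular : aci_zero (aci_dl N) ->
  completion N v = block_mx (ulsubmx (completion N v)) (ursubmx (completion N v))
                            0 (drsubmx (completion N v)).
Proof.
case=> h0 h; have dl0 : dlsubmx (completion N v) = 0.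
  by rewrite -completion_dl /completion h0 add0r big1 // => l _; rewrite h scaler0.
by rewrite -dl0 submxK.
Qed.

End Blocks.

Lemma FRmR_exists_rank p t (A : aciMx F k p t) :
  (0 < t)%N -> FRmR A -> exists v, \rank (completion A v) = p.
Proof. by move=> t_gt0 [t0 | [[v hv] _]]; [rewrite t0 in t_gt0 | exists v]. Qed.

Lemma FCmR_exists_rank q t (C : aciMx F k q t) :
  (q = 0 -> t = 0)%N -> FCmR C -> exists v, \rank (completion C v) = t.
Proof.
move=> qt [q0 | [[v hv] _]]; last by exists v.
exists (fun=> 0); have := rank_leq_col (completion C (fun=> 0)).
by have := qt q0; lia.
Qed.

Lemma FRmR_of_rank p t (A : aciMx F k p t) v : \rank (completion A v) = p -> FRmR A.
Proof. by move=> hv; right; split=> [|w]; [exists v | exact: rank_leq_row]. Qed.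

Lemma FCmR_of_rank q t (C : aciMx F k q t) v : \rank (completion C v) = t -> FCmR C.
Proof. by move=> hv; right; split=> [|w]; [exists v | exact: rank_leq_col]. Qed.

End Completion.

Section ColumnSpace.
Variables (F : fieldType) (k m n : nat) (M : aciMx F k m n).
Implicit Types (S T : {set 'I_n}) (v : 'I_k -> F).

Definition colcoefs (c : 'I_n) : 'M[F]_(k.+1, m) := \matrix_(l, i) aci_coef M l i c.

Definition colspan S : 'M[F]_m := (\sum_(c in S) <<colcoefs c>>)%MS.

Definition colrank S := \rank (colspan S).

Definition colbound S := (colrank S + (n - #|S|))%N.

Lemma colcoefs_sub S c : c \in S -> (colcoefs c <= colspan S)%MS.
Proof. by move=> cS; apply: (sumsmx_sup c) => //; rewrite genmxE. Qed.

Lemma colrank_le S : (colrank S <= m)%N.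
Proof. exact: rank_leq_row. Qed.

Lemma colrank_submod S T : (colrank (S :|: T) + colrank (S :&: T) <= colrank S + colrank T)%N.
Proof.
rewrite /colrank -(mxrank_sum_cap (colspan S) (colspan T)) leq_add //; apply: mxrankS.
  apply/sumsmx_subP => c; rewrite genmxE in_setU => /orP[] cST.
    by apply: submx_trans (addsmxSl _ _); apply: colcoefs_sub.
  by apply: submx_trans (addsmxSr _ _); apply: colcoefs_sub.
apply/sumsmx_subP => c; rewrite genmxE in_setI => /andP[cS cT].
by rewrite sub_capmx !colcoefs_sub.
Qed.

Lemma col_completion_sub v c : ((col c (completion M v))^T <= colcoefs c)%MS.
Proof.
apply/submxP; exists (\row_l if unlift ord0 l is Some l' then v l' else 1).
apply/rowP => i; rewrite !mxE summxE big_ord_recl !mxE /aci_coef unlift_none mul1r.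
by congr (_ + _); apply: eq_bigr => l _; rewrite !mxE /aci_coef liftK.
Qed.

Lemma rank_completion_le v S : (\rank (completion M v) <= colbound S)%N.
Proof.
set X := completion M v.
set P := castmx (erefl m, card_split S) (X *m Qmx F S).
have -> : \rank X = \rank P by rewrite mxrank_castmx mxrankMfree // row_free_unit Qmx_unit.
rewrite -(hsubmxK P); apply: leq_trans (mxrank_row_mx_le _ _) _.
rewrite leq_add ?rank_leq_col // -mxrank_tr; apply: mxrankS; apply/row_subP => j.
set c := colperm S (cast_ord (esym (card_split S)) (lshift _ j)).
have cS : c \in S by rewrite mem_colperm /= ltn_ord.
have -> : row j (lsubmx P)^T = (col c X)^T.
  by apply/rowP => i; rewrite !mxE castmxE mulmx_QmxE !mxE cast_ord_id.
exact: submx_trans (col_completion_sub v c) (colcoefs_sub cS).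
Qed.

Definition attains_colbound S := exists v, \rank (completion M v) = colbound S.

Lemma attains_colbound_eq S T :
  attains_colbound S -> attains_colbound T -> colbound S = colbound T.
Proof.
move=> [v hv] [w hw]; apply/eqP; rewrite eqn_leq.
by rewrite -{1}hv rank_completion_le -hw rank_completion_le.
Qed.

Lemma attains_colboundIU S T : attains_colbound S -> attains_colbound T ->
  attains_colbound (S :&: T) /\ attains_colbound (S :|: T).
Proof.
move=> [v hv] hT; have eST := attains_colbound_eq (ex_intro _ v hv) hT.
move: hv eST (rank_completion_le v (S :&: T)) (rank_completion_le v (S :|: T)).
move: (colrank_submod S T) (cardsUI S T) (max_card S) (max_card T).
move: (max_card (S :&: T)) (max_card (S :|: T)); rewrite /colbound !card_ord => *.
by split; exists v; rewrite /colbound; lia.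
Qed.

Lemma completion_glue S v1 v2 : is_aci M -> exists v,
  (forall i c, c \in S -> completion M v i c = completion M v1 i c) /\
  (forall i c, c \notin S -> completion M v i c = completion M v2 i c).
Proof.
move=> aci.
pose inS l := [exists i, exists j, (j \in S) && (acoef M l i j != 0)].
exists (fun l => if inS l then v1 l else v2 l); split=> i c hc.
  rewrite !completionE; congr (_ + _); apply: eq_bigr => l _.
  have [->|nz] := eqVneq (acoef M l i c) 0; first by rewrite !mulr0.
  by case: ifP => // /negbT /existsPn /(_ i) /existsPn /(_ c); rewrite hc nz.
rewrite !completionE; congr (_ + _); apply: eq_bigr => l _.
have [->|nz] := eqVneq (acoef M l i c) 0; first by rewrite !mulr0.
case: ifP => // /existsP[i' /existsP[j /andP[jS nz']]].
by move: hc; rewrite -(aci l i' i j c nz' nz) jS.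
Qed.

End ColumnSpace.

Section FactorSets.
Variables (F : fieldType) (k m n : nat) (M : aciMx F k m n).
Implicit Types (R : 'M[F]_m) (S : {set 'I_n}) (v : 'I_k -> F).

Definition block_form R p q (e : (p + q)%N = m) S :=
  aci_cast (esym e, card_split S) (aci_rmul (aci_lmul R M) (Qmx F S)).

Definition zero_block_size (medium : bool) (t : nat) :=
  if medium then t == maxn m n else (maxn m n < t)%N.

Definition vanish_below R p S := forall l (r : 'I_m) c,
  (p <= r)%N -> c \in S -> (R *m aci_coef M l) r c = 0.

Section BlockForm.
Variables (R : 'M[F]_m) (p q : nat) (e : (p + q)%N = m) (S : {set 'I_n}).

Lemma block_form_completion v :
  completion (block_form R e S) v =
  castmx (esym e, card_split S) (R *m completion M v *m Qmx F S).
Proof. by rewrite completion_cast completion_rmul completion_lmul. Qed.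

Lemma rank_block_form v : R \in unitmx ->
  \rank (completion (block_form R e S) v) = \rank (completion M v).
Proof.
move=> Ru; rewrite block_form_completion mxrank_castmx.
by rewrite mxrankMfree ?row_free_unit ?Qmx_unit ?mxrank_unitMl.
Qed.

Lemma block_form_ul_eq v w :
  (forall i c, c \in S -> completion M v i c = completion M w i c) ->
  ulsubmx (completion (block_form R e S) v) = ulsubmx (completion (block_form R e S) w).
Proof.
move=> vw; apply/matrixP => i j; rewrite !block_form_completion !mxE !castmxE.
by rewrite !mulmx_QmxE !mxE; apply: eq_bigr => r _; rewrite vw // mem_colperm /= ltn_ord.
Qed.

Lemma block_form_dr_eq v w :
  (forall i c, c \notin S -> completion M v i c = completion M w i c) ->
  drsubmx (completion (block_form R e S) v) = drsubmx (completion (block_form R e S) w).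
Proof.
move=> vw; apply/matrixP => i j; rewrite !block_form_completion !mxE !castmxE.
by rewrite !mulmx_QmxE !mxE; apply: eq_bigr => r _; rewrite vw // mem_colperm /= -leqNgt leq_addr.
Qed.

Lemma block_form_dl_zeroP : aci_zero (aci_dl (block_form R e S)) <-> vanish_below R p S.
Proof.
have coefE l : aci_coef (aci_dl (block_form R e S)) l =
    dlsubmx (castmx (esym e, card_split S) (R *m aci_coef M l *m Qmx F S)).
  by rewrite aci_coef_dl /aci_coef; case: unlift.
rewrite aci_zeroP; split=> [h l r c pr cS | h l].
  have hr : (r - p < q)%N by have := ltn_ord r; have := e; lia.
  have hj : (((colperm_perm S)^-1 c)%g < #|S|)%N by rewrite -mem_colperm colpermKV.
  have := h l; rewrite coefE => /matrixP /(_ (Ordinal hr) (Ordinal hj)) /=.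
  rewrite !mxE castmxE mulmx_QmxE /=.
  have -> : cast_ord (esym (esym e)) (rshift p (Ordinal hr)) = r by apply: val_inj => /=; lia.
  have -> : cast_ord (esym (card_split S)) (lshift _ (Ordinal hj)) = ((colperm_perm S)^-1 c)%g.
    exact: val_inj.
  by rewrite colpermKV mxE.
apply/matrixP => i j; rewrite coefE !mxE castmxE mulmx_QmxE.
by apply: (h l); rewrite ?mem_colperm /= ?leq_addr.
Qed.

Lemma colrank_le_of_vanish : R \in unitmx -> vanish_below R p S -> (colrank M S <= p)%N.
Proof.
move=> Ru hR.
pose K := dsubmx (castmx (esym e, erefl m) R).
have rK : (q <= \rank K)%N.
  have := mxrank_col_mx_le (usubmx (castmx (esym e, erefl m) R)) K.
  rewrite vsubmxK mxrank_castmx mxrank_unit //.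
  by have := rank_leq_row (usubmx (castmx (esym e, erefl m) R)); lia.
have sub : (colspan M S <= kermx K^T)%MS.
  apply/sumsmx_subP => c cS; rewrite genmxE; apply/sub_kermxP.
  apply/matrixP => l i; rewrite !mxE.
  transitivity ((R *m aci_coef M l) (cast_ord (esym (esym e)) (rshift p i)) c).
    by rewrite mxE; apply: eq_bigr => j _; rewrite !mxE castmxE cast_ord_id mulrC.
  by apply: hR; rewrite /= ?leq_addr.
apply: leq_trans (mxrankS sub) _; rewrite mxrank_ker mxrank_tr; lia.
Qed.

End BlockForm.

Lemma vanish_below_col_ebase S :
  vanish_below (invmx (col_ebase (colspan M S)^T)) (colrank M S) S.
Proof.
set A := (colspan M S)^T => l r c pr cS.
have : ((col c (aci_coef M l))^T <= colspan M S)%MS.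
  apply: submx_trans (colcoefs_sub M cS).
  suff -> : (col c (aci_coef M l))^T = row l (colcoefs M c) by rewrite row_sub.
  by apply/rowP => i; rewrite !mxE.
case/submxP => D hD.
have -> : (invmx (col_ebase A) *m aci_coef M l) r c
        = (invmx (col_ebase A) *m col c (aci_coef M l)) r 0.
  by rewrite !mxE; apply: eq_bigr => i _; rewrite !mxE.
(* invmx (col_ebase A) *m A = pid_mx (\rank A) *m row_ebase A vanishes below
   row \rank A. *)
rewrite -[col c _]trmxK hD trmx_mul -/A -{2}(mulmx_ebase A) !mulmxA.
rewrite mulVmx ?col_ebase_unit // mul1mx -!mulmxA mxE big1 // => i _.
by rewrite mxE mxrank_tr ltnNge pr andbF mul0r.
Qed.

Lemma addn_sub_colbound S : (m + n - colbound M S = m - colrank M S + #|S|)%N.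
Proof.
have := colrank_le M S; have := max_card S.
by rewrite card_ord /colbound; lia.
Qed.

Lemma factor_like_attains_colbound medium S : is_aci M -> (0 < #|S|)%N ->
  factor_like medium M S ->
  attains_colbound M S /\ zero_block_size medium (m + n - colbound M S).
Proof.
move=> aci S_gt0 [R [Ru [p [q [e /= [hz hsz hA hC]]]]]].
change (aci_zero (aci_dl (block_form R e S))) in hz.
change (FRmR (aci_ul (block_form R e S))) in hA.
change (FCmR (aci_dr (block_form R e S))) in hC.
have S_le := max_card S; rewrite card_ord in S_le.
(* If q = 0 then C is wide degenerate, hence FCmR by convention; the size
   condition on the zero block then forces n <= #|S|. *)
have q0_S : q = 0%N -> (n - #|S|)%N = 0%N.
  by move=> q0; move: hsz; rewrite q0; case: medium => /= [/eqP|/ltnW]; lia.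
have [v1 hv1] := FRmR_exists_rank S_gt0 hA.
have [v2 hv2] := FCmR_exists_rank q0_S hC.
have [v [vS vN]] := completion_glue S v1 v2 aci.
have hp := colrank_le_of_vanish e Ru (proj1 (block_form_dl_zeroP R e S) hz).
have ub := rank_completion_le M v S.
have lb : (p + (n - #|S|) <= \rank (completion M v))%N.
  rewrite -(rank_block_form e S v Ru) (completion_upper_triangular v hz).
  rewrite -[X in (_ + X)%N]hv2 completion_dr -(block_form_dr_eq R e vN).
  apply: mxrank_block_triangular_ge.
  by rewrite /row_free (block_form_ul_eq R e vS) -completion_ul hv1.
have hpS : colrank M S = p.
  by apply/eqP; rewrite eqn_leq hp -(leq_add2r (n - #|S|)) (leq_trans lb ub).
split; first by exists v; apply/eqP; rewrite eqn_leq ub /colbound hpS.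
by rewrite addn_sub_colbound hpS -e addKn.
Qed.

Lemma attains_colbound_factor_like medium S : attains_colbound M S ->
  zero_block_size medium (m + n - colbound M S) -> factor_like medium M S.
Proof.
move=> [v hv]; rewrite addn_sub_colbound => hsz.
have e : (colrank M S + (m - colrank M S))%N = m by rewrite subnKC ?colrank_le.
pose R := invmx (col_ebase (colspan M S)^T).
have Ru : R \in unitmx by rewrite unitmx_inv col_ebase_unit.
have hz : aci_zero (aci_dl (block_form R e S)).
  exact/block_form_dl_zeroP/vanish_below_col_ebase.
have := completion_upper_triangular v hz.
set X := completion (block_form R e S) v => defX.
have rX : \rank X = colbound M S by rewrite rank_block_form.
have ub1 := mxrank_block_triangular_leC (ulsubmx X) (ursubmx X) (drsubmx X).
have ub2 := mxrank_block_triangular_leA (ulsubmx X) (ursubmx X) (drsubmx X).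
rewrite -defX rX /colbound in ub1 ub2.
have ul_le := rank_leq_row (ulsubmx X).
have dr_le := rank_leq_col (drsubmx X).
exists R; split=> //; exists (colrank M S), (m - colrank M S)%N, e; split=> //.
  apply: (FRmR_of_rank (v := v)); rewrite completion_ul -/X.
  by apply/eqP; rewrite eqn_leq ul_le -(leq_add2r (n - #|S|)) ub2.
apply: (FCmR_of_rank (v := v)); rewrite completion_dr -/X.
by apply/eqP; rewrite eqn_leq dr_le -(leq_add2l (colrank M S)) ub1.
Qed.

Lemma factor_like_setIU medium (S T : {set 'I_n}) : is_aci M -> S :&: T != set0 ->
  factor_like medium M S -> factor_like medium M T ->
  factor_like medium M (S :&: T) /\ factor_like medium M (S :|: T).
Proof.
move=> aci ST0 hS hT.
have ST_gt0 : (0 < #|S :&: T|)%N by rewrite card_gt0.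
have S_gt0 := leq_trans ST_gt0 (subset_leq_card (subsetIl S T)).
have T_gt0 := leq_trans ST_gt0 (subset_leq_card (subsetIr S T)).
have [bS zS] := factor_like_attains_colbound aci S_gt0 hS.
have [bT _] := factor_like_attains_colbound aci T_gt0 hT.
have [bI bU] := attains_colboundIU bS bT.
split; apply: attains_colbound_factor_like => //.
  by rewrite (attains_colbound_eq bI bS).
by rewrite (attains_colbound_eq bU bS).
Qed.

End FactorSets.

Theorem theorem5p5 (F : fieldType) (k m n : nat) (M : aciMx F k m n)
    (F1 F2 : {set 'I_n}) :
  is_aci M -> F1 :&: F2 != set0 ->
  (factor_set M F1 -> factor_set M F2 ->
     factor_set M (F1 :&: F2) /\ factor_set M (F1 :|: F2)) /\
  (semifactor_set M F1 -> semifactor_set M F2 ->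
     semifactor_set M (F1 :&: F2) /\ semifactor_set M (F1 :|: F2)).
Proof. by move=> aci F12; split; apply: factor_like_setIU. Qed.
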